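(* Let $r,m$ be positive integers with $m\ge20r$ and let $B=(T,D,\lambda)$ be an upwards closed quasi-bush with no coat hangers. If $\mathrm{wcol}_{9r}(B,\prec)\le m$ for some linear order $\prec$ on $V(T)$, and for every $w\in V(T)$ we have $|\mathrm{IN}(w,B)|\le m$ or $|\mathrm{OUT}(w,B)|\le m$, then $G(B)$ does not contain an $r$-shallow topological minor isomorphic to a clique on $m^{7}$ vertices.
   Context: A quasi-bush $B=(T,D,\lambda)$: a rooted tree $T$, a set $D$ of pointers from leaves of $T$ to nodes of $T$ (every leaf points to the root), and $\lambda\colon D\to\{0,1\}$. $v\le_T w$ means $v$ is an ancestor of $w$ (including $v=w$); $T(a)$ is the subtree of descendants of $a$. $G(B)$ is the directed graph on the leaves of $T$ where, for distinct leaves $u,v$ and $w$ the lowest ancestor of $v$ with $(u,w)\in D$, $(u,v)$ is an arc iff $\lambda((u,w))=1$; $w$ is the connection point of $(u,v)$. Quasi-bushes are assumed to represent undirected graphs, i.e., $G(B)$ is symmetric, and it is identified with the corresponding undirected graph. $B$ is upwards closed if $(u,w)\in D$ and $w'\le_T w$ imply $(u,w')\in D$. A coat hanger is a subtree $T(a)$ such that $a$ is neither the root nor a leaf, and some leaf $v$ has a pointer labeled $1$ to the parent of $a$ but no pointer to any node of $T(a)$. $\mathrm{IN}(w,B)$ (resp. $\mathrm{OUT}(w,B)$) is the set of all $u$ (resp. $v$) such that $w$ is the connection point of some arc $(u,v)$ of $G(B)$. $\mathrm{wcol}_{r}(B,\prec)$ is computed in the Gaifman graph of $B$ (vertex set $V(T)$,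 edges the tree edges and pointers): the maximum over $v$ of the number of $u$ such that some path of length at most $r$ from $v$ to $u$ has $u$ as its $\prec$-minimum. A graph $H$ is an $r$-shallow topological minor of $G$ if there are vertices $p(u)$, $u\in V(H)$, and internally vertex-disjoint paths of length at most $2r+1$ joining $p(u)$ and $p(v)$ for each edge $uv$ of $H$. *)

From mathcomp Require Import all_boot all_order.
Set Implicit Arguments. Unset Strict Implicit. Unset Printing Implicit Defensive.

Section QuasiBush.
Variable V : finType.

Definition is_rooted_tree (rt : V) (par : V -> V) : Prop :=
  par rt = rt /\ forall v, iter #|V| par v = rt.

Definition anc (par : V -> V) (v w : V) : bool :=
  [exists k : 'I_#|V|.+1, iter k par w == v].

Definition leaf (rt : V) (par : V -> V) (v : V) : bool :=
  ~~ [exists u, (u != rt) && (par u == v)].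

(* D : rel V  (pointer (u,w) in D iff D u w), lam : labels of pointers. *)
Definition is_quasi_bush (rt : V) (par : V -> V) (D : rel V) : Prop :=
  [/\ is_rooted_tree rt par,
      (forall u w, D u w -> leaf rt par u)
    & (forall u, leaf rt par u -> D u rt)].

Definition conn_pt (par : V -> V) (D : rel V) (u v w : V) : bool :=
  [&& anc par w v, D u w &
      [forall w', (anc par w' v && D u w') ==> anc par w' w]].

Definition arc_at rt par (D lam : rel V) (u v w : V) : bool :=
  [&& leaf rt par u, leaf rt par v, u != v, conn_pt par D u v w & lam u w].

(* arcs of G(B) (vertices of G(B) are the leaves of T) *)
Definition GB rt par (D lam : rel V) : rel V :=
  fun u v => [exists w, arc_at rt par D lam u v w].

Definition IN rt par (D lam : rel V) (w : V) : {set V} :=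
  [set u | [exists v, arc_at rt par D lam u v w]].
Definition OUT rt par (D lam : rel V) (w : V) : {set V} :=
  [set v | [exists u, arc_at rt par D lam u v w]].

Definition upwards_closed (par : V -> V) (D : rel V) : Prop :=
  forall u w w', D u w -> anc par w' w -> D u w'.

Definition coat_hanger rt par (D lam : rel V) (a : V) : Prop :=
  [/\ a != rt, ~~ leaf rt par a &
      exists v, [/\ leaf rt par v, D v (par a), lam v (par a) &
                    forall x, anc par a x -> ~~ D v x]].

Definition no_coat_hangers rt par (D lam : rel V) : Prop :=
  forall a, ~ coat_hanger rt par D lam a.

Definition gaifman rt par (D : rel V) : rel V :=
  fun a b => [&& a != b &
     [|| (a != rt) && (par a == b), (b != rt) && (par b == a), D a b | D b a]].

Definition linear_order (lt : rel V) : Prop :=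
  [/\ irreflexive lt, transitive lt & forall x y, x != y -> lt x y || lt y x].

(* wr E lt u k v <=> there is a walk of length <= k from v to u in E
   all of whose vertices other than u are lt-larger than u
   (i.e. u is the lt-minimum of the walk). *)
Fixpoint wr (E : rel V) (lt : rel V) (u : V) (k : nat) (v : V) : bool :=
  if k is k'.+1 then
    (v == u) || (lt u v && [exists x, E v x && wr E lt u k' x])
  else v == u.

Definition wreach (E lt : rel V) (r : nat) (v : V) : {set V} :=
  [set u | wr E lt u r v].

Definition wcol rt par (D : rel V) (r : nat) (lt : rel V) : nat :=
  \max_(v : V) #|wreach (gaifman rt par D) lt r v|.

Definition internal (x : V) (s : seq V) : seq V := behead (belast x s).

Definition shallow_top_clique (Vx : pred V) (E : rel V) (r n : nat) : Prop :=
  exists (p : 'I_n -> V) (P : 'I_n -> 'I_n -> seq V),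
    [/\ injective p,
        (forall i, Vx (p i)),
        (forall i j : 'I_n, i < j ->
           [/\ path E (p i) (P i j), last (p i) (P i j) = p j,
               uniq (p i :: P i j) & size (P i j) <= 2 * r + 1]),
        (forall i j : 'I_n, i < j ->
           forall x, x \in internal (p i) (P i j) -> x \notin codom p)
      & (forall i j i' j' : 'I_n, i < j -> i' < j' -> (i, j) != (i', j') ->
           [disjoint internal (p i) (P i j) & internal (p i') (P i' j')])].

End QuasiBush.

(** In a coat-hanger-free, upwards closed quasi-bush the connection point of an
    arc (u, v) is v itself or the parent of v.  An arc of G(B) is therefore a
    walk of length at most 2 in the Gaifman graph (pointer u -> w, then at most
    one tree edge), so each path of a shallow topological clique lifts to a
    walk of length at most 9r whose minimum z is weakly 9r-reachable from both
    branch vertices.  Either z lies on the path, or it is the connection point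
    of an arc of the path, and then one end of that arc lies in the small side
    (IN or OUT) of z.  Charging every edge of the clique to one of its branch
    vertices together with such a vertex of its subdivided path is injective,
    and each branch vertex receives at most m(m+1) charges; so
    m^7 - 1 <= 2m(m+1), which fails for m >= 2. *)
From mathcomp Require Import all_boot all_order zify.
Set Implicit Arguments. Unset Strict Implicit. Unset Printing Implicit Defensive.

Lemma card_bigcup_le (I T : finType) (P : pred I) (F : I -> {set T}) :
  #|\bigcup_(i | P i) F i| <= \sum_(i | P i) #|F i|.
Proof.
elim/big_rec2: _ => [|i k U _ IH]; first by rewrite cards0.
by apply: leq_trans (leq_card_setU _ _) _; rewrite leq_add2l.
Qed.

Lemma card_set_pairs (I T : finType) (Y : I -> {set T}) :
  #|[set u : I * T | u.2 \in Y u.1]| = \sum_i #|Y i|.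
Proof.
rewrite -sum1_card; under [RHS]eq_bigr do rewrite -sum1_card.
by rewrite pair_big_dep; apply: eq_bigl => u; rewrite inE.
Qed.

Lemma mem_ends_internal (T : finType) (x y : T) (s : seq T) : s != [::] ->
  y \in x :: s -> [|| y == x, y \in internal x s | y == last x s].
Proof.
case: s => // c s _; rewrite [x :: _]lastI mem_rcons !inE /internal /=.
by case/orP => [->|/orP[]->]; rewrite ?orbT.
Qed.

Section WeakReach.
Variables (V : finType) (E lt : rel V).

Definition refl_closure : rel V := fun a b => (a == b) || E a b.

Lemma wr_mono u k k' v : k <= k' -> wr E lt u k v -> wr E lt u k' v.
Proof.
elim: k k' v => [|k IH] [|k'] v //= kk'; first by move=> ->.
case/orP=> [->//|/andP[luv /existsP[x /andP[Evx wx]]]].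
apply/orP; right; rewrite luv; apply/existsP; exists x.
by rewrite Evx (IH k' x kk' wx).
Qed.

Lemma wreach_mono k k' v : k <= k' -> wreach E lt k v \subset wreach E lt k' v.
Proof. by move=> kk'; apply/subsetP => u; rewrite !inE; apply: wr_mono. Qed.

Lemma wr_walk u a s : path refl_closure a s ->
  all (fun x => (x == u) || lt u x) (a :: s) -> u \in a :: s ->
  wr E lt u (size s) a.
Proof.
elim: s a => [|b s IH] a /= => [_ _|/andP[Eab ps] /and3P[la lb ls]].
  by rewrite mem_seq1 eq_sym.
rewrite in_cons => /orP[/eqP<-|us]; first by rewrite eqxx.
have wb : wr E lt u (size s) b by apply: IH; rewrite /= ?lb.
case/orP: la => [->//|lua].
case/orP: Eab => [/eqP->|Eab]; first exact: wr_mono (leqnSn _) wb.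
by apply/orP; right; rewrite lua; apply/existsP; exists b; rewrite Eab.
Qed.

Lemma linear_order_min : linear_order lt -> forall x s,
  exists2 z, z \in x :: s & all (fun y => (y == z) || lt z y) (x :: s).
Proof.
case=> _ lt_trans lt_total x; elim=> [|y s [z zs /allP zmin]].
  by exists x; rewrite ?mem_head //= eqxx.
have mem_xys w : w \in x :: y :: s = (w == y) || (w \in x :: s).
  by rewrite !in_cons orbCA.
have [yz|] := boolP ((y == z) || lt z y).
  exists z; first by rewrite mem_xys zs orbT.
  by apply/allP => w; rewrite mem_xys => /orP[/eqP->//|/zmin].
rewrite negb_or => /andP[nyz nlzy].
have lyz : lt y z by move: (lt_total y z nyz); rewrite (negbTE nlzy) orbF.
exists y; first by rewrite mem_xys eqxx.
apply/allP => w; rewrite mem_xys => /orP[->//|/zmin/orP[/eqP->|]].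
  by rewrite lyz orbT.
by move=> /(lt_trans _ _ _ lyz) ->; rewrite orbT.
Qed.

Lemma walk_min_wreach k a s : symmetric E -> linear_order lt ->
  path refl_closure a s -> size s <= k ->
  exists z, [/\ z \in a :: s, z \in wreach E lt k a & z \in wreach E lt k (last a s)].
Proof.
move=> E_sym lt_lin walk sk; have [z zs zmin] := linear_order_min lt_lin a s.
have rev_walk : last a s :: rev (belast a s) = rev (a :: s).
  by rewrite [a :: s]lastI rev_rcons.
exists z; split; rewrite // inE; apply: wr_mono sk _; first exact: wr_walk.
rewrite -(size_belast a s) -size_rev.
apply: wr_walk; rewrite ?rev_walk ?all_rev ?mem_rev //.
by rewrite rev_path; apply: sub_path walk => b c; rewrite /refl_closure eq_sym E_sym.
Qed.

End WeakReach.

Section QuasiBushArcs.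
Variables (V : finType) (rt : V) (par : V -> V) (D lam : rel V).

Lemma gaifman_sym : symmetric (gaifman rt par D).
Proof.
move=> a b; rewrite /gaifman eq_sym; case: (b != a) => //=.
by rewrite orbCA [D a b || _]orbC.
Qed.

Hypothesis par_rt : par rt = rt.
Hypothesis iter_par_card : forall v, iter #|V| par v = rt.

Lemma iter_par_root k v : #|V| <= k -> iter k par v = rt.
Proof. by move=> Vk; rewrite -(subnK Vk) iterD iter_par_card iter_fix. Qed.

Lemma par_periodic_root k a : iter k.+1 par a = a -> a = rt.
Proof.
move=> ka; rewrite -(iter_fix #|V| ka) -iterM.
by apply: iter_par_root; apply: leq_pmulr.
Qed.

Lemma anc_iter k v : anc par (iter k par v) v.
Proof.
apply/existsP; have [kV|/ltnW Vk] := leqP k #|V|.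
  by exists (Ordinal (kV : k < #|V|.+1)).
by exists ord_max; rewrite /= !iter_par_root.
Qed.

Hypothesis up_closed : upwards_closed par D.
Hypothesis no_ch : no_coat_hangers rt par D lam.

Lemma pointer_to_child u a : leaf rt par u -> D u (par a) -> lam u (par a) ->
  a != rt -> ~~ leaf rt par a -> D u a.
Proof.
move=> Lu Dpa lpa art nla.
have [/existsP[x /andP[ax Dux]]|none] := boolP [exists x, anc par a x && D u x].
  exact: up_closed Dux ax.
exfalso; apply: (@no_ch a); split=> //; exists u; split=> // x ax.
by apply: contraNN none => Dux; apply/existsP; exists x; rewrite ax.
Qed.

Lemma arc_conn_pt u v w : arc_at rt par D lam u v w -> w = v \/ w = par v.
Proof.
case/and5P=> Lu _ _ /and3P[/existsP[k0 /eqP k0w] Duw /forallP wmin] luw.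
have: exists k, iter k par v == w by exists k0; apply/eqP.
case/ex_minnP => -[|[|k]] /eqP kw kmin; [by left | by right |].
pose a := iter k.+1 par v.
have paw : par a = w by [].
have aw : a != w by apply/eqP => /eqP/kmin; rewrite ltnn.
have art : a != rt by apply: contra_neq aw => art; rewrite -paw art par_rt.
have nla : ~~ leaf rt par a.
  rewrite negbK; apply/existsP; exists (iter k par v); rewrite eqxx andbT.
  by apply: contra_neq art => e; rewrite /a /= e par_rt.
have Dua : D u a by apply: pointer_to_child; rewrite ?paw.
have /existsP[j /eqP wa] : anc par a w by have := wmin a; rewrite anc_iter Dua.
by case/eqP: art; apply: (@par_periodic_root j); rewrite iterSr paw.
Qed.

Lemma arc_gaifman u v w : arc_at rt par D lam u v w ->
  refl_closure (gaifman rt par D) u w && refl_closure (gaifman rt par D) w v.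
Proof.
move=> uvw; have /and5P[_ _ _ /and3P[_ Duw _] _] := uvw.
rewrite /refl_closure /gaifman Duw !orbT andbT orbN /=.
case: (arc_conn_pt uvw) => ->; first by rewrite eqxx.
case: (eqVneq (par v) v) => //= pvv; rewrite eqxx andbT orbCA; apply/orP; left.
by apply: contra_neq pvv => ->.
Qed.

Definition conn u v := odflt u [pick w | arc_at rt par D lam u v w].

Lemma conn_arc u v : GB rt par D lam u v -> arc_at rt par D lam u v (conn u v).
Proof. by rewrite /conn; case: pickP => [w //|none /existsP[w]]; rewrite none. Qed.

Fixpoint lift x s := if s is y :: s' then conn x y :: y :: lift y s' else [::].

Lemma size_lift x s : size (lift x s) = (size s).*2.
Proof. by elim: s x => //= y s IH x; rewrite IH. Qed.

Lemma last_lift x s : last x (lift x s) = last x s.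
Proof. by elim: s x => /=. Qed.

Lemma lift_path x s : path (GB rt par D lam) x s ->
  path (refl_closure (gaifman rt par D)) x (lift x s).
Proof.
elim: s x => //= y s IH x /andP[/conn_arc/arc_gaifman/andP[-> ->] /IH //].
Qed.

Lemma mem_lift x s z : path (GB rt par D lam) x s -> z \in lift x s ->
  z \in s \/ exists a b, [/\ a \in x :: s, b \in x :: s & arc_at rt par D lam a b z].
Proof.
elim: s x => //= y s IH x /andP[xy ys]; rewrite !in_cons.
case/or3P => [/eqP->|->|/(IH y ys)[->|[a [b [ay by_ abz]]]]];
  rewrite ?orbT; [|by left..|].
  by right; exists x, y; rewrite !in_cons !eqxx orbT; split=> //; apply: conn_arc.
by right; exists a, b; split; rewrite // in_cons ?ay ?by_ orbT.
Qed.

Lemma gb_path_wreach lt x s : linear_order lt -> path (GB rt par D lam) x s ->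
  exists z, [/\ z \in wreach (gaifman rt par D) lt (size s).*2 x,
    z \in wreach (gaifman rt par D) lt (size s).*2 (last x s) &
    z \in x :: s \/
    exists a b, [/\ a \in x :: s, b \in x :: s & arc_at rt par D lam a b z]].
Proof.
move=> lt_lin walk.
have [z [zl zx zlast]] :=
  walk_min_wreach gaifman_sym lt_lin (lift_path walk) (eq_leq (size_lift x s)).
exists z; split; rewrite -?(last_lift x s) //.
move: zl; rewrite in_cons => /orP[/eqP->|/(mem_lift walk)[zs|]]; last by right.
  by left; rewrite mem_head.
by left; rewrite in_cons zs orbT.
Qed.

Definition small_side m z : {set V} :=
  z |: (if #|IN rt par D lam z| <= m then IN rt par D lam z else OUT rt par D lam z).

Lemma card_small_side m z :
  #|IN rt par D lam z| <= m \/ #|OUT rt par D lam z| <= m -> #|small_side m z| <= m.+1.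
Proof.
move=> small; apply: leq_trans (leq_card_setU _ _) _; rewrite cards1 add1n ltnS.
by case: ifP => // /negbT; case: small; lia.
Qed.

Lemma card_bigcup_small_side m (W : {set V}) :
  (forall z, #|IN rt par D lam z| <= m \/ #|OUT rt par D lam z| <= m) ->
  #|W| <= m -> #|\bigcup_(z in W) small_side m z| <= m * m.+1.
Proof.
move=> IN_OUT W_le; apply: leq_trans (card_bigcup_le _ _) _.
apply: leq_trans (leq_sum _ (fun z _ => card_small_side (IN_OUT z))) _.
by rewrite sum_nat_const leq_mul2r W_le orbT.
Qed.

Lemma small_side_arc m a b z : arc_at rt par D lam a b z ->
  (a \in small_side m z) || (b \in small_side m z).
Proof.
move=> abz; rewrite !in_setU1; case: ifP => _; rewrite !inE.
  by apply/orP; left; apply/orP; right; apply/existsP; exists b.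
by apply/orP; right; apply/orP; right; apply/existsP; exists a.
Qed.

Lemma gb_path_small_side m lt x s : linear_order lt -> path (GB rt par D lam) x s ->
  exists z y, [/\ z \in wreach (gaifman rt par D) lt (size s).*2 x,
    z \in wreach (gaifman rt par D) lt (size s).*2 (last x s),
    y \in x :: s & y \in small_side m z].
Proof.
move=> lt_lin walk.
have [z [zx zlast [zs|[a [b [a_in b_in abz]]]]]] := gb_path_wreach lt_lin walk.
  by exists z, z; rewrite setU11.
by case/orP: (small_side_arc m abz); [exists z, a | exists z, b].
Qed.

End QuasiBushArcs.

Section TopCliqueCharging.
Variables (T : finType) (n : nat) (p : 'I_n -> T) (P : 'I_n -> 'I_n -> seq T).
Hypothesis p_inj : injective p.
Hypothesis last_P : forall i j : 'I_n, i < j -> last (p i) (P i j) = p j.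
Hypothesis internal_P : forall i j : 'I_n, i < j ->
  forall x, x \in internal (p i) (P i j) -> x \notin codom p.
Hypothesis disjoint_P : forall i j i' j' : 'I_n,
  i < j -> i' < j' -> (i, j) != (i', j') ->
  [disjoint internal (p i) (P i j) & internal (p i') (P i' j')].

(* The clique edge ab, witnessed by a vertex y of its path, is charged to the
   end other than y (to a when y is internal). *)
Definition other_end (a b : 'I_n) (y : T) := if y == p a then b else a.

Lemma mem_clique_path (a b : 'I_n) y : a < b -> y \in p a :: P a b ->
  [|| y == p a, y \in internal (p a) (P a b) | y == p b].
Proof.
move=> ab; rewrite -(last_P ab); apply: mem_ends_internal.
move: (ab); apply: contraTneq => Pab.
by have := last_P ab; rewrite Pab => /p_inj->; rewrite ltnn.
Qed.

Lemma clique_endpoint_pair (a b c : 'I_n) : a < b -> p c \in p a :: P a b ->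
  let e := other_end a b (p c) in (a, b) = if c < e then (c, e) else (e, c).
Proof.
move=> ab /(mem_clique_path ab)/or3P[/eqP/p_inj-> | /(internal_P ab) | /eqP/p_inj->].
- by rewrite /other_end eqxx ab.
- by rewrite codom_f.
have pba : (p b == p a) = false by apply/eqP => /p_inj ba; rewrite ba ltnn in ab.
by rewrite /other_end pba ltnNge (ltnW ab).
Qed.

Lemma clique_path_inj (a b a' b' : 'I_n) y : a < b -> a' < b' ->
  y \in p a :: P a b -> y \in p a' :: P a' b' ->
  other_end a b y = other_end a' b' y -> (a, b) = (a', b').
Proof.
move=> ab ab' ya ya' ends.
have [/codomP[c yc]|ync] := boolP (y \in codom p).
  move: ya ya' ends; rewrite yc => /(clique_endpoint_pair ab) /= ->.
  by move=> /(clique_endpoint_pair ab') /= -> ->.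
have internal_y (i j : 'I_n) :
    i < j -> y \in p i :: P i j -> y \in internal (p i) (P i j).
  move=> ij /(mem_clique_path ij)/or3P[/eqP yp|//|/eqP yp];
  by rewrite yp codom_f in ync.
apply/eqP; apply: contraT => neq.
by rewrite -(disjointFr (disjoint_P ab ab' neq) (internal_y _ _ ab ya)) internal_y.
Qed.

Lemma top_clique_charge_bound (Y : 'I_n -> {set T}) K :
  (forall e, #|Y e| <= K) ->
  (forall a b : 'I_n, a < b ->
     exists2 y, y \in p a :: P a b & y \in Y (other_end a b y)) ->
  n.-1 <= K.*2.
Proof.
move=> Y_le charge.
pose ok a b y := (y \in p a :: P a b) && (y \in Y (other_end a b y)).
pose c a b := odflt (p a) [pick y | ok a b y].
have c_ok (a b : 'I_n) : a < b -> ok a b (c a b).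
  move=> /charge[y ya yY]; rewrite /c; case: pickP => [//|/(_ y)].
  by rewrite /ok ya yY.
pose sort2 (i j : 'I_n) := if i < j then (i, j) else (j, i).
pose f (ij : 'I_n * 'I_n) := let ab := sort2 ij.1 ij.2 in
  ((other_end ab.1 ab.2 (c ab.1 ab.2), ij.1 < ij.2), c ab.1 ab.2).
pose S := [set ij : 'I_n * 'I_n | ij.2 \in [set~ ij.1]].
have sort2_lt ij : ij \in S -> (sort2 ij.1 ij.2).1 < (sort2 ij.1 ij.2).2.
  case: ij => i j; rewrite !inE /sort2 /= => ji.
  by case: (ltngtP i j) => //= ij; rewrite (val_inj ij) eqxx in ji.
have f_inj : {in S &, injective f}.
  move=> [i j] [i' j'] /sort2_lt lt /sort2_lt lt'; rewrite /f /= => -[ends bit cc].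
  have /andP[ya _] := c_ok _ _ lt; have /andP[ya' _] := c_ok _ _ lt'.
  rewrite cc in ya ends.
  have : sort2 i j = sort2 i' j'.
    rewrite [sort2 i j]surjective_pairing [sort2 i' j']surjective_pairing.
    exact: clique_path_inj lt lt' ya ya' ends.
  by move: bit; rewrite /sort2; case: (i < j); case: (i' < j') => // _ [-> ->].
have fS : f @: S \subset [set u : ('I_n * bool) * T | u.2 \in Y u.1.1].
  apply/subsetP => _ /imsetP[ij /sort2_lt lt ->]; rewrite inE.
  by case/andP: (c_ok _ _ lt).
have := subset_leq_card fS; rewrite card_in_imset //.
rewrite (card_set_pairs (fun i : 'I_n => [set~ i])).
rewrite (card_set_pairs (fun u : 'I_n * bool => Y u.1)).
rewrite (eq_bigr (fun=> n.-1)) => [|i _]; last by rewrite cardsC1 card_ord.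
move/leq_trans/(_ (leq_sum _ (fun u _ => Y_le u.1))).
rewrite !sum_nat_const card_prod card_bool !card_ord -mulnA mul2n.
move=> le; have [n0|n_gt0] := posnP n; first by rewrite n0.
by rewrite -(leq_pmul2l n_gt0).
Qed.

End TopCliqueCharging.

Theorem lemma7p33 (V : finType) (rt : V) (par : V -> V) (D lam : rel V)
    (r m : nat) :
  0 < r -> 0 < m -> 20 * r <= m ->
  is_quasi_bush rt par D ->
  symmetric (GB rt par D lam) ->
  upwards_closed par D ->
  no_coat_hangers rt par D lam ->
  (exists lt : rel V, linear_order lt /\ wcol rt par D (9 * r) lt <= m) ->
  (forall w : V, #|IN rt par D lam w| <= m \/ #|OUT rt par D lam w| <= m) ->
  ~ shallow_top_clique (leaf rt par) (GB rt par D lam) r (m ^ 7).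
Proof.
move=> r_gt0 _ rm [[par_rt iter_par_card] _ _] _ up_closed no_ch.
move=> [lt [lt_lin wcol_le]] IN_OUT [p [P [p_inj _ P_path P_internal P_disjoint]]].
pose W v := wreach (gaifman rt par D) lt (9 * r) v.
have W_le v : #|W v| <= m := leq_trans (leq_bigmax v) wcol_le.
pose Y e := \bigcup_(z in W (p e)) small_side rt par D lam m z.
have Y_le e : #|Y e| <= m * m.+1 by apply: card_bigcup_small_side.
have charge (a b : 'I_(m ^ 7)) : a < b ->
    exists2 y, y \in p a :: P a b & y \in Y (other_end p a b y).
  move=> ab; have [walk last_ab _ size_ab] := P_path a b ab.
  have [z [y [za zb ya yz]]] :=
    gb_path_small_side par_rt iter_par_card up_closed no_ch m lt_lin walk.
  have sub v : {subset wreach (gaifman rt par D) lt (size (P a b)).*2 v <= W v}.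
    by apply/subsetP/wreach_mono; lia.
  exists y => //; apply/bigcupP; exists z => //.
  by rewrite /other_end; case: ifP => _; rewrite -?last_ab; apply: sub.
have last_P (a b : 'I_(m ^ 7)) : a < b -> last (p a) (P a b) = p b.
  by move=> /P_path[].
have := top_clique_charge_bound p_inj last_P P_internal P_disjoint Y_le charge.
have : m ^ 3 <= m ^ 7 by rewrite leq_pexp2l; lia.
nia.
Qed.
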